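(* Let $(E,\|\cdot\|_E)$, $(F,\|\cdot\|_F)$ be normed vector spaces, $\Omega\subseteq E$, $f:\Omega\to F$, and $\mathfrak{X}\subseteq\Omega$. Assume $f$ is $\beta$-Lipschitz on $\mathfrak{X}$, i.e. $\|f(x)-f(y)\|_F\le\beta\|x-y\|_E$ for all $x,y\in\mathfrak{X}$. Then for any $\eta>0$ and $\varepsilon>0$, $$\mathcal{N}(S^+_\eta[f(\mathfrak{X})],\|\cdot\|_F,\varepsilon)\le\mathcal{N}\Big(\mathfrak{X},\|\cdot\|_E,\frac{\eta}{16\beta}\varepsilon\Big)^2.$$
   Context: For a subset $\mathfrak{Y}$ of a normed space, $\mathcal{N}(\mathfrak{Y},\|\cdot\|,\varepsilon)$ is the minimal number of closed balls of radius $\varepsilon$ with centers in $\mathfrak{Y}$ needed to cover $\mathfrak{Y}$. The set of long chords is $S^+_\eta[f(\mathfrak{X})]=\{(f(x)-f(y))/\|f(x)-f(y)\|_F:\ x,y\in\mathfrak{X},\ \|f(x)-f(y)\|_F>\eta\}$. *)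

From HB Require Import structures.
From mathcomp Require Import all_boot all_order all_algebra finmap.
From mathcomp Require Import all_classical all_reals all_analysis.
Set Implicit Arguments. Unset Strict Implicit. Unset Printing Implicit Defensive.
Import Order.TTheory GRing.Theory Num.Theory.
Import numFieldNormedType.Exports.
Local Open Scope classical_set_scope.
Local Open Scope ring_scope.

Definition cball {R : realType} {V : normedModType R} (c : V) (e : R) : set V :=
  [set y | `|c - y| <= e].

Definition is_cover {R : realType} {V : normedModType R}
  (Y : set V) (e : R) (C : {fset V}) : Prop :=
  [set` C] `<=` Y /\ Y `<=` \bigcup_(c in [set` C]) cball c e.

(* covering number N(Y, ||.||, e): minimal number of closed e-balls with
   centres in Y covering Y (+oo if no finite cover exists) *)
Definition covering_number {R : realType} {V : normedModType R}
  (Y : set V) (e : R) : \bar R :=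
  ereal_inf [set ((#|` C|)%:R)%:E | C in [set C : {fset V} | is_cover Y e C]].

Definition long_chords {R : realType} {E F : normedModType R}
  (f : E -> F) (X : set E) (eta : R) : set F :=
  [set u | exists x y, X x /\ X y /\ eta < `|f x - f y| /\
                       u = `|f x - f y|^-1 *: (f x - f y)].

From HB Require Import structures.
From mathcomp Require Import all_boot all_order all_algebra finmap.
From mathcomp Require Import all_classical all_reals all_analysis.
From mathcomp Require Import ring lra.
Import Order.TTheory GRing.Theory Num.Theory.
Import numFieldNormedType.Exports.
Local Open Scope classical_set_scope.
Local Open Scope ring_scope.

(* Cover X by closed delta-balls centred at C.  Moving the endpoints of a
   chord by at most 2 delta moves f x - f y by at most 4 beta delta, and
   normalizing a vector of norm > eta changes its direction by at most twice
   the relative change.  Hence all long chords whose endpoints lie near the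
   same pair of centres are eps-close to each other, and one long chord per
   pair of centres (when there is one) is an eps-cover with centres in the
   set of long chords, of size #|C|^2. *)

Definition normalize {R : numDomainType} {V : normedModType R} (v : V) : V :=
  `|v|^-1 *: v.

Lemma normalize_dist_le {R : realType} {V : normedModType R} (a b : V) :
  a != 0 -> b != 0 ->
  `|normalize a - normalize b| <= 2 * `|a - b| / `|a|.
Proof.
move=> a0 b0; rewrite /normalize.
have na : 0 < `|a| by rewrite normr_gt0.
have nb : 0 < `|b| by rewrite normr_gt0.
have -> : `|a|^-1 *: a - `|b|^-1 *: b
          = `|a|^-1 *: (a - b) + (`|a|^-1 - `|b|^-1) *: b.
  by rewrite scalerBr scalerBl addrA subrK.
apply: (le_trans (ler_normD _ _)).
have -> : `|(`|a|^-1 - `|b|^-1) *: b| = `| `|b| - `|a| | / `|a|.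
  rewrite normrZ -{2}(gtr0_norm nb) -normrM.
  have -> : (`|a|^-1 - `|b|^-1) * `|b| = (`|b| - `|a|) / `|a|.
    by field; rewrite !gt_eqF.
  by rewrite normrM normfV normr_id.
rewrite normrZ normfV normr_id.
have := ler_dist_dist b a; rewrite distrC => ba.
by rewrite mulrC -mulrDl ler_pM2r ?invr_gt0 //; lra.
Qed.

Lemma cball_dist_le {R : realType} {V : normedModType R} {c x y : V} {r : R} :
  cball c r x -> cball c r y -> `|x - y| <= 2 * r.
Proof.
rewrite /cball /= => cx cy.
have -> : x - y = (c - y) - (c - x) by rewrite opprB [RHS]addrC addrA subrK.
by apply: (le_trans (ler_normB _ _)); lra.
Qed.

Section CoveringNumber.
Context {R : realType} {V : normedModType R}.
Implicit Types (Y : set V) (e : R) (C : {fset V}).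

Lemma covering_number_le_card Y e C :
  is_cover Y e C -> (covering_number Y e <= (#|` C|%:R)%:E)%E.
Proof. by move=> YC; apply: ereal_inf_lbound; exists C. Qed.

Lemma covering_number_attained {Y e C} : is_cover Y e C ->
  exists2 C', is_cover Y e C' & covering_number Y e = (#|` C'|%:R)%:E.
Proof.
move=> YC.
pose P n := `[< exists2 C', is_cover Y e C' & #|` C'| = n >].
have [|n /asboolP [C' YC' <-] nmin] := @ex_minnP P.
  by exists #|` C|; apply/asboolP; exists C.
exists C' => //; apply/eqP; rewrite eq_le covering_number_le_card //=.
apply/ereal_infP => _ [D YD <-]; rewrite lee_fin ler_nat.
by apply: nmin; apply/asboolP; exists D.
Qed.

Lemma covering_number_pinfty Y e :
  (forall C, ~ is_cover Y e C) -> covering_number Y e = +oo%E.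
Proof. by move=> nocover; apply/ereal_inf_pinfty => _ [C /nocover []]. Qed.

Lemma covering_number_le_size {T : eqType} Y e (s : seq T) (A : T -> set V) :
  Y `<=` \bigcup_(i in [set` s]) A i ->
  (forall i u v, i \in s -> A i u -> A i v -> Y u -> Y v -> `|u - v| <= e) ->
  (covering_number Y e <= (size s)%:R%:E)%E.
Proof.
move=> YA diamA.
pose pick i := xget 0 (Y `&` A i).
have pickP i : Y `&` A i !=set0 -> (Y `&` A i) (pick i).
  by move=> [y yA]; rewrite /pick; case: xgetP => [_ -> // | /(_ y)].
pose D := [fset u in [seq pick i | i <- s & `[< Y `&` A i !=set0 >]]]%fset.
apply: (le_trans (covering_number_le_card Y e D _)).
  split.
    move=> u /=; rewrite inE => /mapP [i].
    by rewrite mem_filter => /andP [/asboolP /pickP [Yp _] _] ->.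
  move=> y Yy; have [i si Aiy] := YA y Yy.
  have ne : Y `&` A i !=set0 by exists y.
  have [Yp Ap] := pickP i ne.
  exists (pick i); last exact: diamA i _ _ si Ap Aiy Yp Yy.
  rewrite /= inE; apply/mapP; exists i => //.
  by rewrite mem_filter si andbT; apply/asboolP.
rewrite lee_fin ler_nat card_fseq (leq_trans (size_undup _)) // size_map.
by rewrite size_filter count_size.
Qed.

End CoveringNumber.

Section LongChords.
Context {R : realType} {E F : normedModType R}.
Context {f : E -> F} {X : set E} {beta : R}.
Hypothesis beta_gt0 : 0 < beta.
Hypothesis lipf : forall x y, X x -> X y -> `|f x - f y| <= beta * `|x - y|.

Lemma lipschitz_chord_dist {x y x' y' : E} : X x -> X y -> X x' -> X y' ->
  `|(f x - f y) - (f x' - f y')| <= beta * (`|x - x'| + `|y - y'|).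
Proof.
move=> Xx Xy Xx' Xy'.
have -> : (f x - f y) - (f x' - f y') = (f x - f x') - (f y - f y').
  by rewrite !opprB addrACA [RHS]addrACA [- f y + _]addrC.
rewrite mulrDr; apply: (le_trans (ler_normB _ _)).
by apply: lerD; apply: lipf.
Qed.

Lemma long_chord_dist_le (eta r : R) {x y x' y' : E} :
  0 < eta -> X x -> X y -> X x' -> X y' ->
  eta < `|f x - f y| -> eta < `|f x' - f y'| ->
  `|x - x'| <= r -> `|y - y'| <= r ->
  `|normalize (f x - f y) - normalize (f x' - f y')| <= 4 * beta * r / eta.
Proof.
move=> eta_gt0 Xx Xy Xx' Xy' long long' xx' yy'.
have nz (a b : F) : eta < `|a - b| -> a - b != 0.
  by move=> h; rewrite -normr_gt0 (lt_trans eta_gt0 h).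
apply: (le_trans (normalize_dist_le _ _ (nz _ _ long) (nz _ _ long'))).
set D := `|_ - (_ - _)|.
have D_le : D <= 2 * beta * r.
  apply: (le_trans (lipschitz_chord_dist Xx Xy Xx' Xy')).
  by rewrite [2 * beta]mulrC -mulrA ler_pM2l //; lra.
apply: (@le_trans _ _ (2 * D / eta)).
  apply: ler_wpM2l; first by rewrite mulr_ge0 ?normr_ge0.
  by rewrite lef_pV2 ?posrE ?(ltW long) // (lt_trans eta_gt0).
by rewrite ler_pM2r ?invr_gt0 //; lra.
Qed.

Lemma covering_number_long_chords_le {eta eps delta : R} {C : {fset E}} :
  0 < eta -> 8 * beta * delta <= eta * eps -> is_cover X delta C ->
  (covering_number (long_chords f X eta) eps <= ((#|` C| * #|` C|)%N%:R)%:E)%E.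
Proof.
move=> eta_gt0 delta_small [_ XC].
pose chords_near (p : (E * E)%type) := [set u | exists x y,
  [/\ (X `&` cball p.1 delta) x, (X `&` cball p.2 delta) y,
      eta < `|f x - f y| & u = normalize (f x - f y)]].
rewrite -(size_allpairs pair).
apply: (covering_number_le_size _ _ _ chords_near).
  move=> _ [x [y [Xx [Xy [long ->]]]]].
  have [c cC cx] := XC x Xx; have [d dC dy] := XC y Xy.
  exists (c, d); first exact: allpairs_f.
  by exists x, y; split.
move=> [c d] u v _ [x [y [[Xx cx] [Xy dy] long ->]]].
move=> [x' [y' [[Xx' cx'] [Xy' dy'] long' ->]]] _ _.
apply: (le_trans (long_chord_dist_le eta (2 * delta) eta_gt0 Xx Xy Xx' Xy'
  long long' (cball_dist_le cx cx') (cball_dist_le dy dy'))).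
by rewrite ler_pdivrMr //; lra.
Qed.

End LongChords.

Theorem proposition1 (R : realType) (E F : normedModType R)
  (Omega : set E) (f : E -> F) (X : set E) (beta : R)
  (hXO : X `<=` Omega) (hbeta : 0 < beta)
  (hlip : forall x y, X x -> X y -> `|f x - f y| <= beta * `|x - y|)
  (eta eps : R) (heta : 0 < eta) (heps : 0 < eps) :
  (covering_number (long_chords f X eta) eps
   <= covering_number X (eta / (16 * beta) * eps)
      * covering_number X (eta / (16 * beta) * eps))%E.
Proof.
set delta := eta / (16 * beta) * eps.
(* The constant 16 leaves a factor 2 of slack: 8 would do. *)
have delta_small : 8 * beta * delta <= eta * eps.
  rewrite /delta -subr_ge0.
  have -> : eta * eps - 8 * beta * (eta / (16 * beta) * eps) = eta * eps / 2.
    by field; rewrite gt_eqF.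
  by rewrite divr_ge0 // mulr_ge0 // ltW.
have [[C XC]|nocover] := pselect (exists C, is_cover X delta C).
  have [C' XC' ->] := covering_number_attained XC.
  rewrite -EFinM -natrM.
  exact: (covering_number_long_chords_le hbeta hlip heta delta_small XC').
rewrite (covering_number_pinfty X delta) ?mulyy ?leey // => C XC.
by apply: nocover; exists C.
Qed.
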